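(* Let $\Pi$ be a set of $n$ processes and let $(\mathcal{G}^r)_{r\ge 1}$ be a sequence of communication graphs on $\Pi$. Let $r_1<r_2<\dots<r_n$ be $n$ distinct rounds such that each of $\mathcal{G}^{r_1},\dots,\mathcal{G}^{r_n}$ is rooted (the root components $\operatorname{Root}(\mathcal{G}^{r_i})$ need not coincide), and let $G=\{\mathcal{G}^{r_1},\dots,\mathcal{G}^{r_n}\}$. Let $X\subseteq\Pi$ satisfy $X\cap\operatorname{Root}(\mathcal{G}^{r_i})\neq\emptyset$ for every $i\in\{1,\dots,n\}$. Then for every $p\in\Pi$ there exist $q\in X$ and $i\in\{1,\dots,n\}$ such that $q\in\operatorname{Root}(\mathcal{G}^{r_i})$ and $q\in \mathrm{CP}_p(r_i,r_n)$.
   Context: A communication graph on the process set $\Pi$ is a directed graph with vertex set $\Pi$ containing every self-loop $(p\to p)$. A root component of a graph $\mathcal{G}$ is a nonempty set $R\subseteq\Pi$ that is the vertex set of a strongly connected component of $\mathcal{G}$ such that whenever $(p\to q)\in\mathcal{G}$ with $q\in R$, also $p\in R$. A graph is rooted if it has exactly one root component, denoted $\operatorname{Root}(\mathcal{G})$. For two graphs $\mathcal{G},\mathcal{G}'$ on the same vertex set $V$, the compound graph $\mathcal{G}\circ\mathcal{G}'$ has edge $(p,q)$ iff there is $p'\in V$ with $(p,p')\in\mathcal{G}$ and $(p',q)\in\mathcal{G}'$. For rounds $a\le b$, the causal past of $p$ is $\mathrm{CP}_p(a,b)=\{p\}$ if $a=b$, and $\mathrm{CP}_p(a,b)=\{q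 : (q,p)\in \mathcal{G}^{a+1}\circ\cdots\circ\mathcal{G}^{b}\}$ if $a<b$. *)

From mathcomp Require Import all_boot.
Set Implicit Arguments. Unset Strict Implicit. Unset Printing Implicit Defensive.

(* Communication graphs on a finite process set T, as relations: g p q = edge p -> q. *)
Section Graphs.
Variable T : finType.

Definition comm_graph (g : rel T) : Prop := forall p, g p p.

Definition is_scc (g : rel T) (R : {set T}) : bool :=
  [exists p, R == [set q | connect g p q && connect g q p]].

Definition is_root_component (g : rel T) (R : {set T}) : bool :=
  [&& R != set0, is_scc g R &
      [forall p, forall q, g p q ==> (q \in R) ==> (p \in R)]].

Definition rooted (g : rel T) : bool :=
  #|[set R : {set T} | is_root_component g R]| == 1.

(* Root g: the union of root components (the unique one when g is rooted) *)
Definition Root (g : rel T) : {set T} :=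
  \bigcup_(R : {set T} | is_root_component g R) R.

Definition compound (g g' : rel T) : rel T :=
  fun p q => [exists p', g p p' && g' p' q].

(* cgraph G a k = G (a+1) o G (a+2) o ... o G (a+k+1) *)
Fixpoint cgraph (G : nat -> rel T) (a k : nat) : rel T :=
  match k with
  | 0 => G a.+1
  | k'.+1 => compound (cgraph G a k') (G (a + k'.+2))
  end.

Definition CP (G : nat -> rel T) (p : T) (a b : nat) : {set T} :=
  if a < b then [set q | cgraph G a (b - a).-1 q p] else [set p].

End Graphs.

From mathcomp Require Import all_boot.

Set Implicit Arguments. Unset Strict Implicit. Unset Printing Implicit Defensive.

(* Suppose no process of X lying in Root(G^{r_i}) belongs to S_i := CP_p(r_i, r_n).
   Since X meets every root, no root is contained in S_i.  In a rooted reflexive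
   graph, a nonempty set that does not contain the root gains a new in-neighbour
   (otherwise it would be closed under ancestors, and the ancestors of any vertex
   contain a root component); and the in-neighbours of S_{i+1} in G^{r_{i+1}} lie
   in S_i.  Hence |S_n| = 1 < |S_{n-1}| < ... < |S_1| < |in-neighbours of S_1| <= n,
   which is impossible. *)

Section RootedGrowth.
Variable T : finType.

Definition in_nbhd (g : rel T) (S : {set T}) : {set T} :=
  [set x | [exists y in S, g x y]].

Lemma sub_in_nbhd (g : rel T) (S : {set T}) : comm_graph g -> S \subset in_nbhd g S.
Proof.
move=> g_refl; apply/subsetP => x xS; rewrite inE.
by apply/existsP; exists x; rewrite xS g_refl.
Qed.

Lemma in_nbhd_closed_connect (g : rel T) (S : {set T}) x y :
  in_nbhd g S \subset S -> connect g x y -> y \in S -> x \in S.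
Proof.
move=> closedS /connectP [s g_s ->] {y}.
elim: s x g_s => [|z s IHs] x //= /andP [gxz g_s] lastS.
apply: (subsetP closedS); rewrite inE; apply/existsP; exists z.
by rewrite IHs.
Qed.

(* An ancestor of [s] with fewest ancestors lies in a root component. *)
Lemma root_component_among_ancestors (g : rel T) (s : T) :
  exists2 R, is_root_component g R & R \subset [set x | connect g x s].
Proof.
have [m m_s m_min] :=
  arg_minnP (P := connect g^~ s) (fun x => #|[set y | connect g y x]|) (connect0 g s).
exists [set q | connect g m q && connect g q m]; last first.
  by apply/subsetP => q; rewrite !inE => /andP [_ q_m]; apply: connect_trans q_m m_s.
apply/and3P; split.
- by apply/set0Pn; exists m; rewrite inE connect0.
- by apply/existsP; exists m.
apply/forallP => x; apply/forallP => q; apply/implyP => gxq; apply/implyP.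
rewrite !inE => /andP [_ q_m]; have x_m := connect_trans (connect1 gxq) q_m.
rewrite x_m andbT.
have anc_sub : [set y | connect g y x] \subset [set y | connect g y m].
  by apply/subsetP => y; rewrite !inE => y_x; apply: connect_trans y_x x_m.
have anc_eq : [set y | connect g y x] = [set y | connect g y m].
  by apply/eqP; rewrite eqEcard anc_sub m_min //=; apply: connect_trans x_m m_s.
by have /setP/(_ m) := anc_eq; rewrite !inE connect0.
Qed.

Lemma rooted_RootE (g : rel T) (R : {set T}) :
  rooted g -> is_root_component g R -> Root g = R.
Proof.
move=> /cards1P [R0 rootsE] rootR.
have rootE R' : is_root_component g R' = (R' == R0).
  by rewrite -in_set1 -rootsE inE.
by rewrite /Root (eq_bigl _ _ rootE) big_pred1_eq -(eqP (etrans (esym (rootE R)) rootR)).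
Qed.

Lemma rooted_in_nbhd_grows (g : rel T) (S : {set T}) :
  comm_graph g -> rooted g -> S != set0 -> ~~ (Root g \subset S) ->
  #|S| < #|in_nbhd g S|.
Proof.
move=> g_refl g_rooted /set0Pn [s sS] rootNsub.
have S_sub := sub_in_nbhd S g_refl.
rewrite ltn_neqAle subset_leq_card // andbT; apply: contra rootNsub => /eqP cardE.
have S_eq : S = in_nbhd g S by apply/eqP; rewrite eqEcard S_sub cardE /=.
have closedS : in_nbhd g S \subset S by rewrite -S_eq.
have [R rootR R_anc] := root_component_among_ancestors g s.
rewrite (rooted_RootE g_rooted rootR); apply/subsetP => x /(subsetP R_anc).
by rewrite inE => x_s; apply: in_nbhd_closed_connect x_s sS.
Qed.

Lemma decreasing_chain_length (f : nat -> nat) n :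
  (forall i, i < n -> 0 < f i.+1 -> f i.+1 < f i) -> 0 < f n -> n + f n <= f 0.
Proof.
elim: n => [|n IHn] f_decr // f_n1_gt0.
have lt_f_n := f_decr n (ltnSn n) f_n1_gt0.
apply: leq_trans _ (IHn (fun i lt_in => f_decr i (ltnW lt_in)) _).
  by rewrite addSnnS leq_add2l.
exact: leq_ltn_trans (leq0n _) lt_f_n.
Qed.

Lemma root_avoiding_chain_length (g : nat -> rel T) (S : nat -> {set T}) n :
  (forall i, 0 < i <= n -> comm_graph (g i)) ->
  (forall i, 0 < i <= n -> rooted (g i)) ->
  (forall i, 0 < i <= n -> ~~ (Root (g i) \subset S i)) ->
  (forall i, i < n -> in_nbhd (g i.+1) (S i.+1) \subset S i) ->
  S n != set0 -> n + #|S n| <= #|S 0|.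
Proof.
move=> g_refl g_rooted rootNsub nbhd_sub S_n.
apply: (@decreasing_chain_length (fun i => #|S i|)); last by rewrite card_gt0.
move=> i lt_in; rewrite card_gt0 => S_i1.
apply: leq_trans (rooted_in_nbhd_grows _ _ S_i1 _) (subset_leq_card (nbhd_sub i lt_in)).
- exact: g_refl.
- exact: g_rooted.
- exact: rootNsub.
Qed.

End RootedGrowth.

Section CausalPast.
Variables (T : finType) (G : nat -> rel T).

Lemma cgraph_cons a k x y z :
  G a.+1 x y -> cgraph G a.+1 k y z -> cgraph G a k.+1 x z.
Proof.
move=> Gxy; elim: k z => [|k IHk] z /=.
  by move=> Gyz; apply/existsP; exists y; rewrite Gxy addn2.
case/existsP => w /andP [yw Gwz]; apply/existsP; exists w.
by apply/andP; split; [exact: IHk | rewrite -addSnnS].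
Qed.

Lemma in_nbhd_CP p a b : a < b -> in_nbhd (G a.+1) (CP G p a.+1 b) \subset CP G p a b.
Proof.
move=> lt_ab; apply/subsetP => x; rewrite inE => /existsP [y /andP [yCP Gxy]].
move: yCP; rewrite /CP lt_ab; case: ltnP => [lt_a1b | le_ba1]; rewrite !inE.
  have -> : (b - a).-1 = (b - a.+1).-1.+1 by rewrite prednK ?subn_gt0 // subnS.
  exact: cgraph_cons.
have -> : b = a.+1 by apply/eqP; rewrite eqn_leq le_ba1 lt_ab.
by move=> /eqP <-; rewrite subSnn.
Qed.

Hypothesis G_refl : forall t, 0 < t -> comm_graph (G t).

Lemma CP_antitone p a c b : a <= c <= b -> CP G p c b \subset CP G p a b.
Proof.
case/andP=> le_ac le_cb; elim: c le_ac le_cb => [|c IHc] le_ac le_cb.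
  by move: le_ac; rewrite leqn0 => /eqP ->.
case: (ltngtP a c.+1) le_ac => // [lt_ac1 _ | <- //].
apply: subset_trans (IHc lt_ac1 (ltnW le_cb)).
apply: subset_trans (in_nbhd_CP p le_cb).
exact: sub_in_nbhd (G_refl _).
Qed.

Lemma in_nbhd_CP_le p a c b :
  a < c <= b -> in_nbhd (G c) (CP G p c b) \subset CP G p a b.
Proof.
case: c => [|c] /andP [lt_ac le_cb] //.
apply: subset_trans (in_nbhd_CP p le_cb) (CP_antitone _ _).
by rewrite -ltnS lt_ac ltnW.
Qed.

End CausalPast.

Theorem lemma1 (T : finType) (G : nat -> rel T) (r : nat -> nat) (X : {set T}) :
  (forall t, 0 < t -> comm_graph (G t)) ->
  0 < r 1 ->
  (forall i j, 1 <= i -> i < j -> j <= #|T| -> r i < r j) ->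
  (forall i, 1 <= i <= #|T| -> rooted (G (r i))) ->
  (forall i, 1 <= i <= #|T| -> X :&: Root (G (r i)) != set0) ->
  forall p : T, exists q : T, exists i : nat,
    [/\ q \in X, 1 <= i <= #|T|, q \in Root (G (r i)) & q \in CP G p (r i) (r #|T|)].
Proof.
move=> G_refl r1_gt0 r_incr G_rooted X_root p; set n := #|T|.
have r_le i j : 0 < i <= j -> j <= n -> r i <= r j.
  case/andP=> i_gt0; rewrite leq_eqVlt => /predU1P [-> // | lt_ij le_jn].
  exact: ltnW (r_incr _ _ i_gt0 lt_ij le_jn).
have r_gt0 i : 0 < i <= n -> 0 < r i.
  by case/andP=> i_gt0 le_in; apply: leq_trans r1_gt0 (r_le _ _ _ le_in).
pose S i := if 0 < i then CP G p (r i) (r n) else [set: T].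
case: (boolP [exists i : 'I_n, Root (G (r i.+1)) \subset S i.+1]).
  case/existsP=> i root_sub; have i_n : 0 < i.+1 <= n := ltn_ord i.
  have [q /setIP [qX q_root]] := set0Pn _ (X_root _ i_n).
  by exists q, i.+1; split; rewrite // (subsetP root_sub).
move/existsPn=> rootNsub; exfalso.
have n_gt0 : 0 < n by apply/card_gt0P; exists p.
suff : n + #|S n| <= #|S 0| by rewrite /S n_gt0 cardsT /CP ltnn cards1 addn1 ltnn.
apply: root_avoiding_chain_length => [i i_n | i i_n | [|i] i_n | [|i] lt_in |].
- exact: G_refl (r_gt0 i i_n).
- exact: G_rooted.
- by [].
- exact: rootNsub (Ordinal i_n).
- exact: subsetT.
- apply: in_nbhd_CP_le => //; rewrite r_incr ?r_le //.
- by rewrite /S n_gt0 /CP ltnn; apply/set0Pn; exists p; rewrite set11.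
Qed.
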